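(* Let $X$ and $Y$ be finite nonempty sets, and let $S$ and $T$ be association schemes on $X$ and $Y$ respectively. Let $\varphi: X\cup S\to Y\cup T$ be an admissible morphism from $S$ to $T$, and let $\mathbf{H}(\varphi): S\to T$ be the restriction of $\varphi$ to $S$. Then $\mathbf{H}(\varphi):\mathbf{H}(S)\to\mathbf{H}(T)$ is a homomorphism of hypergroups. Furthermore, for admissible morphisms $\psi$ from $R$ to $S$ and $\varphi$ from $S$ to $T$ (with $R$ an association scheme on a finite set), $\mathbf{H}(\varphi\circ\psi)=\mathbf{H}(\varphi)\circ\mathbf{H}(\psi)$.
   Context: For a nonempty set $X$: $1_X=\{(x,x):x\in X\}$; for $p\subseteq X\times X$, $p^*=\{(a,b):(b,a)\in p\}$ and $xp=\{y\in X:(x,y)\in p\}$. An association scheme on $X$ is a partition $S$ of $X\times X$ with $1_X\in S$, $p^*\in S$ whenever $p\in S$, and such that for all $p,q,r\in S$ there is a cardinal $a_{pq}^r$ with $|yp\cap zq^*|=a_{pq}^r$ for all $y\in X$ and $z\in yr$. Complex multiplication: for $p,q\in S$, $pq=\{r\in S: a_{pq}^r\ge 1\}$. $\mathbf{H}(S)$ denotes the hypergroup with underlying set $S$, hyperoperation $(p,q)\mapsto pq$ (complex multiplication), identity $1_X$ and inverse $p\mapsto p^*$. A hypergroup is a nonempty set $H$ with a map $*:H\times H\to P^*(H)$ (nonempty subsets), extended to subsets by $A*B=\bigcup_{a\in A,b\in B}a*b$, such that: $(a*b)*c=a*(b*c)$; there is a unique $e$ with $e*x=x*e=\{x\}$ for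 all $x$; for every $f$ there is a unique $f^{-1}$ with $e\in (f^{-1}*f)\cap(f*f^{-1})$; and $c\in a*b$ implies $a\in c*b^{-1}$ and $b\in a^{-1}*c$. A homomorphism of hypergroups $f:H_1\to H_2$ is a function with $f(a*_1b)\subseteq f(a)*_2f(b)$ for all $a,b$. A morphism from $S$ (on $X$) to $T$ (on $Y$) is a function $f:X\cup S\to Y\cup T$ with $f(X)\subseteq Y$, $f(S)\subseteq T$, and $(f(x),f(y))\in f(p)$ for all $p\in S$, $(x,y)\in p$. It is admissible if whenever $x\in X$, $y\in Y$, $p\in S$ with $(f(x),y)\in f(p)$, there exists $z\in X$ with $(x,z)\in p$ and $f(z)=y$. *)

From mathcomp Require Import all_boot.
Set Implicit Arguments. Unset Strict Implicit. Unset Printing Implicit Defensive.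

Section Defs.
Variable X : finType.

Definition diagX : {set X * X} := [set u | u.1 == u.2].
Definition transp (p : {set X * X}) : {set X * X} := [set u | (u.2, u.1) \in p].
Definition nbr (p : {set X * X}) (x : X) : {set X} := [set y | (x, y) \in p].

Definition is_scheme (S : {set {set X * X}}) : Prop :=
  [/\ partition S [set: X * X],
      diagX \in S,
      (forall p, p \in S -> transp p \in S) &
      (forall p q r, p \in S -> q \in S -> r \in S ->
         exists n : nat, forall y z, (y, z) \in r ->
           #|nbr p y :&: nbr (transp q) z| = n)].

(* intersection number a_{pq}^r, computed at some (y,z) in r (well defined
   for a scheme, where relations are nonempty) *)
Definition inum (p q r : {set X * X}) : nat :=
  match [pick u in r] with
  | Some u => #|nbr p u.1 :&: nbr (transp q) u.2|
  | None => 0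
  end.

Definition cprod (S : {set {set X * X}}) (p q : {set X * X}) : {set {set X * X}} :=
  [set r in S | 0 < inum p q r].
End Defs.

(* A map X ∪ S -> Y ∪ T is given by its two components. *)
Record smap (X Y : finType) := SMap {
  mX : X -> Y;
  mS : {set X * X} -> {set Y * Y} }.

Definition is_morphism (X Y : finType) (S : {set {set X * X}})
  (T : {set {set Y * Y}}) (f : smap X Y) : Prop :=
  (forall p, p \in S -> mS f p \in T) /\
  (forall p x y, p \in S -> (x, y) \in p -> (mX f x, mX f y) \in mS f p).

Definition is_admissible (X Y : finType) (S : {set {set X * X}})
  (T : {set {set Y * Y}}) (f : smap X Y) : Prop :=
  is_morphism S T f /\
  (forall x y p, p \in S -> (mX f x, y) \in mS f p ->
     exists z, (x, z) \in p /\ mX f z = y).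

Definition comp_smap (W X Y : finType) (g : smap X Y) (f : smap W X) : smap W Y :=
  SMap (fun w => mX g (mX f w)) (fun p => mS g (mS f p)).

Definition Hmap (X Y : finType) (f : smap X Y) : {set X * X} -> {set Y * Y} := mS f.

Definition hyper_hom (X Y : finType) (S : {set {set X * X}}) (T : {set {set Y * Y}})
  (h : {set X * X} -> {set Y * Y}) : Prop :=
  (forall p, p \in S -> h p \in T) /\
  (forall p q, p \in S -> q \in S -> h @: cprod S p q \subset cprod T (h p) (h q)).

From mathcomp Require Import all_boot.

(* Only the morphism property is needed: a positive intersection number
   a_{pq}^r is witnessed by a path y -p-> w -q-> z with (y, z) in r, and a
   morphism maps such a path to one in T, where a_{f(p) f(q)}^{f(r)} is
   independent of the chosen pair of f(r). *)

Section IntersectionNumbers.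
Context {X : finType}.
Implicit Types (p q r : {set X * X}) (S : {set {set X * X}}).

Lemma inum_gt0_path {p q r} :
  0 < inum p q r ->
  exists y z w, [/\ (y, z) \in r, (y, w) \in p & (w, z) \in q].
Proof.
rewrite /inum; case: pickP => [[y z] yzr|_]; last by rewrite ltnn.
case/card_gt0P=> w; rewrite !inE /= => /andP[ywp wzq].
by exists y, z, w.
Qed.

Lemma path_inum_gt0 {S p q r y z w} :
  is_scheme S -> p \in S -> q \in S -> r \in S ->
  (y, z) \in r -> (y, w) \in p -> (w, z) \in q -> 0 < inum p q r.
Proof.
case=> _ _ _ intersection_const pS qS rS yzr ywp wzq.
have [n const_n] := intersection_const p q r pS qS rS.
have : 0 < #|nbr p y :&: nbr (transp q) z|.
  by apply/card_gt0P; exists w; rewrite !inE /= ywp wzq.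
rewrite (const_n _ _ yzr) /inum.
case: pickP => [[y' z'] /const_n -> //|/(_ (y, z))].
by rewrite yzr.
Qed.

End IntersectionNumbers.

Lemma morphism_hyper_hom (X Y : finType) (S : {set {set X * X}})
    (T : {set {set Y * Y}}) (phi : smap X Y) :
  is_scheme T -> is_morphism S T phi -> hyper_hom S T (Hmap phi).
Proof.
move=> HT [phiT phi_edge]; split=> // p q pS qS.
apply/subsetP=> _ /imsetP[r /[!inE] /andP[rS pqr] ->].
have [y [z [w [yzr ywp wzq]]]] := inum_gt0_path pqr.
rewrite phiT //=.
exact: (path_inum_gt0 HT (phiT _ pS) (phiT _ qS) (phiT _ rS)
  (phi_edge _ _ _ rS yzr) (phi_edge _ _ _ pS ywp) (phi_edge _ _ _ qS wzq)).
Qed.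

Lemma Hmap_comp (W X Y : finType) (psi : smap W X) (phi : smap X Y) :
  Hmap (comp_smap phi psi) =1 Hmap phi \o Hmap psi.
Proof. by []. Qed.

Theorem proposition3p1 :
  (forall (X Y : finType) (S : {set {set X * X}}) (T : {set {set Y * Y}})
          (phi : smap X Y),
     0 < #|X| -> 0 < #|Y| -> is_scheme S -> is_scheme T ->
     is_admissible S T phi ->
     hyper_hom S T (Hmap phi)) /\
  (forall (W X Y : finType) (R : {set {set W * W}}) (S : {set {set X * X}})
          (T : {set {set Y * Y}}) (psi : smap W X) (phi : smap X Y),
     0 < #|W| -> 0 < #|X| -> 0 < #|Y| ->
     is_scheme R -> is_scheme S -> is_scheme T ->
     is_admissible R S psi -> is_admissible S T phi ->
     {in R, forall p, Hmap (comp_smap phi psi) p = Hmap phi (Hmap psi p)}).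
Proof.
split.
- move=> X Y S T phi _ _ _ HT [phi_morph _].
  exact: morphism_hyper_hom.
- move=> W X Y R S T psi phi _ _ _ _ _ _ _ _ p _.
  exact: Hmap_comp.
Qed.
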